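(* Let $n\ge 3$ and let $O$ be an optimal acyclic matching on the $(n-2)$-skeleton $\Delta^n_{(n-2)}$ of $\Delta^n$. Let $U$ be the set of critical $(n-2)$-dimensional simplices of $O$. Let $F_0,\dots,F_n$ be the $(n-1)$-dimensional simplices of $\Delta^n$, and let $K_{n+1}$ be the complete graph on the vertex set $\{F_0,\dots,F_n\}$. Identify each $(n-2)$-simplex $u$ of $\Delta^n$ with the edge $\{F_i,F_j\}$ of $K_{n+1}$, where $F_i,F_j$ are the two $(n-1)$-simplices of $\Delta^n$ containing $u$ (this is a bijection between $(n-2)$-simplices of $\Delta^n$ and edges of $K_{n+1}$). Then $|U|=n$ and, under this identification, $U$ is the edge set of a spanning tree of $K_{n+1}$.
   Context: All simplicial complexes are finite abstract simplicial complexes; simplices are nonempty. $\Delta^n$ is the simplicial complex of all nonempty subsets of an $(n+1)$-element vertex set; $\Delta^n_{(k)}$ denotes its $k$-skeleton (simplices of dimension $\le k$). The Hasse diagram $\mathcal{H}(K)$ of $K$ is the directed graph whose vertices are the simplices of $K$, with an edge $\sigma\to\tau$ whenever $\sigma\subsetneq\tau$ and $\dim\tau=\dim\sigma+1$. A matching on $\mathcal{H}(K)$ is a set $W$ of edges of $\mathcal{H}(K)$, no two sharing a vertex; an edge $\sigma\to\tau$ in $W$ is called a pair $(\sigma,\tau)$, and a simplex lying in no pair is called critical. $W$ is acyclic if the directed graph obtained from $\mathcal{H}(K)$ by reversing every edge in $W$ has no directed cycle. An acyclic matching is optimal if it minimizes the total number of critical simplices among all acyclic matchings on $K$. *)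

From mathcomp Require Import all_boot.
Set Implicit Arguments. Unset Strict Implicit. Unset Printing Implicit Defensive.

(* Abstract simplicial complexes on a finite vertex type T are represented as
   families K : {set {set T}} of nonempty vertex sets; dim s = #|s| - 1. *)
Section Defs.
Variable T : finType.
Implicit Types (K : {set {set T}}) (s t : {set T}).

Definition simplex : {set {set T}} := [set s : {set T} | s != set0].

Definition skeleton K (k : nat) : {set {set T}} :=
  [set s in K | #|s| <= k.+1].

Definition hasse K s t : bool :=
  [&& s \in K, t \in K, s \proper t & #|t| == #|s|.+1].

Definition is_matching K (W : {set {set T} * {set T}}) : Prop :=
  (forall p, p \in W -> hasse K p.1 p.2) /\
  (forall p q, p \in W -> q \in W -> p != q ->
     [set p.1; p.2] :&: [set q.1; q.2] = set0).

Definition mod_edge K (W : {set {set T} * {set T}}) : rel {set T} :=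
  fun s t => (hasse K s t && ((s, t) \notin W)) || (hasse K t s && ((t, s) \in W)).

Definition acyclic_matching K (W : {set {set T} * {set T}}) : Prop :=
  is_matching K W /\
  (forall s t, mod_edge K W s t -> ~~ connect (mod_edge K W) t s).

Definition critical K (W : {set {set T} * {set T}}) : {set {set T}} :=
  [set s in K | [forall p in W, (p.1 != s) && (p.2 != s)]].

Definition optimal_acyclic_matching K (W : {set {set T} * {set T}}) : Prop :=
  acyclic_matching K W /\
  (forall W', acyclic_matching K W' -> #|critical K W| <= #|critical K W'|).
End Defs.

(* Simple undirected graphs on a vertex set Vs : {set V}, with edge set
   E : {set {set V}} consisting of 2-element subsets. *)
Section Graphs.
Variable V : finType.

Definition gadj (E : {set {set V}}) : rel V :=
  fun x y => (x != y) && ([set x; y] \in E).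

Definition is_spanning_tree (Vs : {set V}) (E : {set {set V}}) : Prop :=
  (forall e, e \in E -> e \subset Vs /\ #|e| = 2) /\
  (forall x y, x \in Vs -> y \in Vs -> connect (gadj E) x y) /\
  ~ (exists c : seq V, 2 < size c /\ ucycle (gadj E) c).
End Graphs.

(* The (n-1)-simplices F_i of Delta^n, and the edge {F_i,F_j} associated to an
   (n-2)-simplex u: the set of (n-1)-simplices containing u. *)
Definition facets (n : nat) : {set {set 'I_n.+1}} :=
  [set F in simplex 'I_n.+1 | #|F| == n].

Definition edge_of (n : nat) (u : {set 'I_n.+1}) : {set {set 'I_n.+1}} :=
  [set F in facets n | u \subset F].

From mathcomp Require Import all_boot zify.
Set Implicit Arguments. Unset Strict Implicit. Unset Printing Implicit Defensive.

(* The cone matching from the vertex 0 leaves critical only {0} and the n faces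
   of dimension n-2 of the facet opposite 0, so an optimal matching has at most
   n+1 critical cells.  Every acyclic matching has a critical vertex, hence at
   most n critical (n-2)-cells remain.  Conversely, for any splitting of the
   facets into two nonempty classes S and S', some critical (n-2)-cell lies in a
   facet of S and one of S': otherwise, among the (n-2)-cells with this property,
   a gradient path could always be prolonged -- down along the matching, then
   up into another such cell missing the vertex just dropped -- contradicting
   acyclicity.  The critical (n-2)-cells therefore form a connected
   graph on the n+1 facets with at most n edges, that is a spanning tree. *)

Lemma subsetC1 (T : finType) (s : {set T}) a : (s \subset [set~ a]) = (a \notin s).
Proof. by rewrite subsetC sub1set inE. Qed.

Lemma setC1_inj (T : finType) : injective (fun i : T => [set~ i]).
Proof. by move=> i j /setC_inj /set1_inj. Qed.

Lemma acyclic_of_potential (X : finType) (e : rel X) (f : X -> nat) :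
  (forall x y, e x y -> f x < f y) -> forall s t, e s t -> ~~ connect e t s.
Proof.
move=> f_lt s t est.
have f_le x y : connect e x y -> f x <= f y.
  case/connectP=> p; elim: p x => [|z p IHp] x /=; first by move=> _ ->.
  by case/andP=> exz pz ly; apply: leq_trans (ltnW (f_lt _ _ exz)) (IHp _ pz ly).
by apply: contraL (f_lt s t est) => /f_le; rewrite leqNgt.
Qed.

Lemma acyclic_sink (X : finType) (e : rel X) (A : {set X}) x0 :
  (forall s t, e s t -> ~~ connect e t s) -> x0 \in A ->
  exists2 x, x \in A & forall s y, e x s -> connect e s y -> y \notin A.
Proof.
move=> e_acyclic Ax0; pose reach x := #|[set z | connect e x z]|.
case: (arg_minnP reach Ax0) => x Ax x_min; exists x => // s y exs csy.
apply/negP => Ay.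
have : [set z | connect e y z] \proper [set z | connect e x z].
  apply/properP; split.
    apply/subsetP => z; rewrite !inE.
    exact: connect_trans (connect_trans (connect1 exs) csy).
  exists x; rewrite !inE ?connect0 //.
  by apply: contraNN (e_acyclic _ _ exs) => /(connect_trans csy).
by move/proper_card; rewrite ltnNge x_min.
Qed.

Lemma acyclic_source (X : finType) (e : rel X) (A : {set X}) x0 :
  (forall s t, e s t -> ~~ connect e t s) -> x0 \in A ->
  exists2 x, x \in A & forall s y, e s x -> connect e y s -> y \notin A.
Proof.
move=> e_acyclic Ax0; pose e' := [rel x y | e y x].
have e'_acyclic s t : e' s t -> ~~ connect e' t s by rewrite connect_rev; exact: e_acyclic.
have [x Ax x_sink] := acyclic_sink e'_acyclic Ax0.
by exists x => // s y esx cys; apply: x_sink esx _; rewrite connect_rev.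
Qed.

Lemma connect_exit (X : finType) (e : rel X) (A : {set X}) x y :
  connect e x y -> x \in A -> y \notin A ->
  exists a b, [/\ a \in A, b \notin A & e a b].
Proof.
case/connectP=> p; elim: p x => [|z p IHp] x /=; first by move=> _ -> ->.
case/andP=> exz pz ly xA yA.
have [zA|zA] := boolP (z \in A); first exact: IHp pz ly zA yA.
by exists x, z.
Qed.

Lemma connect_of_cuts (X : finType) (e : rel X) x y :
  (forall S : {set X}, x \in S -> y \notin S ->
     exists a b, [/\ a \in S, b \notin S & e a b]) ->
  connect e x y.
Proof.
move=> cut; apply: contraT => nxy.
have [||a [b []]] := cut [set z | connect e x z]; rewrite ?inE ?connect0 //.
move=> xa /negP nxb eab.
by case: nxb; apply: connect_trans xa (connect1 eab).
Qed.

Lemma next_next_neq (X : eqType) (c : seq X) x :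
  uniq c -> 2 < size c -> x \in c -> next c (next c x) != x.
Proof.
move=> c_uniq c_gt2 xc; case: (rot_to xc) => i c' c_rot.
rewrite -!(next_rot i c_uniq) c_rot.
have : uniq (x :: c') by rewrite -c_rot rot_uniq.
have : 2 < size (x :: c') by rewrite -c_rot size_rot.
case: c' {c_rot} => [|y [|z c']] //= _.
rewrite eqxx !inE !negb_or => /andP [/and3P [xy xz _] /andP [yz _]].
by rewrite [y == x]eq_sym (negbTE xy) eqxx eq_sym.
Qed.

Section Graphs.
Variable V : finType.
Implicit Types (E : {set {set V}}) (A Vs : {set V}).

(* Exploring Vs from the seed A adds one vertex and one new edge at a time. *)
Lemma card_connected_seed E Vs A E' r :
  r \in A -> E' \subset E -> (forall e, e \in E' -> e \subset A) ->
  (forall y, y \in Vs -> connect (gadj E) r y) ->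
  #|Vs| + #|E'| <= #|E| + #|A|.
Proof.
move=> + + + r_conn; have [m] := ubnP #|~: A|.
elim: m A E' => // m IHm A E' cA rA sE'E E'A.
have [VsA|/subsetPn [y yVs yA]] := boolP (Vs \subset A).
  by rewrite addnC leq_add ?subset_leq_card.
have [a [b [aA bA /andP [_ abE]]]] := connect_exit (r_conn y yVs) rA yA.
have abE' : [set a; b] \notin E'.
  by apply: contra bA => /E'A /subsetP; apply; rewrite set22.
suff : #|Vs| + #|[set a; b] |: E'| <= #|E| + #|b |: A|.
  by rewrite !cardsU1 abE' bA !add1n !addnS ltnS.
apply: IHm.
- by move: cA (cardsC A) (cardsC (b |: A)); rewrite cardsU1 bA /=; lia.
- by rewrite in_setU1 rA orbT.
- by rewrite subUset sub1set abE.
move=> e; rewrite in_setU1 => /predU1P [-> | /E'A eA].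
  by rewrite subUset !sub1set !in_setU1 aA eqxx !orbT.
exact: subset_trans eA (subsetU1 _ _).
Qed.

Lemma card_cycle_edges (c : seq V) : uniq c -> 2 < size c ->
  #|[set [set x; next c x] | x in c]| = size c.
Proof.
move=> c_uniq c_gt2; rewrite card_in_imset; first exact/card_uniqP.
move=> x y xc yc exy; apply/eqP; apply: contraT => nxy.
have : x \in [set y; next c y] by rewrite -exy set21.
have : y \in [set x; next c x] by rewrite exy set21.
rewrite !inE [y == x]eq_sym (negbTE nxy) /= => /eqP ey /eqP ex.
by have := next_next_neq c_uniq c_gt2 xc; rewrite -ey -ex eqxx.
Qed.

Lemma connected_card_spanning_tree Vs E :
  (forall e, e \in E -> e \subset Vs /\ #|e| = 2) ->
  (forall x y, x \in Vs -> y \in Vs -> connect (gadj E) x y) ->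
  #|E| < #|Vs| -> #|Vs| = #|E|.+1 /\ is_spanning_tree Vs E.
Proof.
move=> E_edges E_conn ltEVs.
have /card_gt0P [r rVs] : 0 < #|Vs| by apply: leq_ltn_trans ltEVs.
have card_Vs : #|Vs| = #|E|.+1.
  suff : #|Vs| + #|set0 : {set {set V}}| <= #|E| + #|[set r]|.
    by rewrite cards0 cards1 addn0 addn1 => le_Vs_E; apply/eqP; rewrite eqn_leq le_Vs_E ltEVs.
  apply: card_connected_seed (set11 r) (sub0set E) _ (fun y => E_conn r y rVs).
  by move=> e; rewrite inE.
split=> //; split=> //; split=> //; case=> c [c_gt2 /andP [c_cycle c_uniq]].
have [x0 x0c] : exists x0, x0 \in c.
  by case: c {c_cycle c_uniq} c_gt2 => [|x0 c'] // _; exists x0; rewrite mem_head.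
have x0Vs : x0 \in Vs.
  have /andP [_ /E_edges [/subsetP sub _]] := next_cycle c_cycle x0c.
  by apply: sub; rewrite set21.
suff : #|Vs| + #|[set [set x; next c x] | x in c]| <= #|E| + #|[set x in c]|.
  by rewrite card_cycle_edges // cardsE (card_uniqP c_uniq) leq_add2r leqNgt ltEVs.
apply: (card_connected_seed (r := x0)); first by rewrite inE.
- by apply/subsetP => _ /imsetP [x xc ->]; case/andP: (next_cycle c_cycle xc).
- by move=> _ /imsetP [x xc ->]; rewrite subUset !sub1set !inE mem_next xc.
- by move=> y; exact: E_conn.
Qed.

End Graphs.

Section Matchings.
Variables (T : finType) (K : {set {set T}}) (W : {set {set T} * {set T}}).
Hypothesis W_matching : is_matching K W.

Lemma matching_eq p q z : p \in W -> q \in W ->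
  z \in [set p.1; p.2] -> z \in [set q.1; q.2] -> p = q.
Proof.
case: W_matching => _ W_disj pW qW zp zq; apply/eqP; apply: contraT => pq.
by have /setP /(_ z) := W_disj p q pW qW pq; rewrite inE zp zq inE.
Qed.

Lemma matched_face_unique s s' t : (s, t) \in W -> (s', t) \in W -> s = s'.
Proof. by move=> stW s'tW; have [] := matching_eq stW s'tW (set22 s t) (set22 s' t). Qed.

Lemma matched_coface_unique s t t' : (s, t) \in W -> (s, t') \in W -> t = t'.
Proof. by move=> stW st'W; have [] := matching_eq stW st'W (set21 s t) (set21 s t'). Qed.

Lemma mod_edge_matched s t : (s, t) \in W -> mod_edge K W t s.
Proof. by move=> stW; rewrite /mod_edge stW (W_matching.1 _ stW) orbT. Qed.

Lemma mod_edge_unmatched s t : hasse K s t -> (s, t) \notin W -> mod_edge K W s t.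
Proof. by rewrite /mod_edge => -> ->. Qed.

Lemma noncriticalP s : s \in K -> s \notin critical K W ->
  exists2 p, p \in W & p.1 = s \/ p.2 = s.
Proof.
move=> sK; rewrite inE sK => /forall_inPn [p pW].
by rewrite negb_and !negbK => /orP [] /eqP; exists p => //; [left | right].
Qed.

End Matchings.

Lemma mem_skeleton_simplex (T : finType) k (s : {set T}) :
  (s \in skeleton (simplex T) k) = (s != set0) && (#|s| <= k.+1).
Proof. by rewrite !inE. Qed.

Section SkeletonMatchings.
Variables (T : finType) (k : nat).
Local Notation K := (skeleton (simplex T) k).

Lemma matched_down_of_top W s : is_matching K W ->
  s \in K -> #|s| = k.+1 -> s \notin critical K W -> exists r, (r, s) \in W.
Proof.
move=> W_matching sK cs /(noncriticalP sK) [p pW [p1 | p2]].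
  have /and4P [_ p2K _ /eqP cp2] := W_matching.1 p pW.
  by move: p2K; rewrite mem_skeleton_simplex cp2 p1 cs ltnn andbF.
by exists p.1; rewrite -p2 -surjective_pairing.
Qed.

Lemma critical_vertex W (x0 : T) : acyclic_matching K W ->
  exists v, [set v] \in critical K W.
Proof.
case=> W_matching W_acyclic.
have vK v : [set v] \in K by rewrite mem_skeleton_simplex cards1 -card_gt0 cards1.
have /(acyclic_source W_acyclic) [_ /imsetP [v _ ->] v_source] :
  [set x0] \in [set [set v] | v : T] by exact: imset_f.
exists v; apply: contraT => /(noncriticalP (vK v)) [[s t] stW /= [sv | tv]]; last first.
  have /and4P [sK _ _ /eqP] := W_matching.1 _ stW.
  rewrite tv cards1 => -[/esym/eqP]; rewrite cards_eq0 => /eqP s0.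
  by move: sK; rewrite s0 mem_skeleton_simplex eqxx.
move: (W_matching.1 _ stW); rewrite /hasse /= sv cards1.
case/and4P => _ tK /proper_sub /subsetP /(_ v (set11 v)) vt ct.
have /cards1P [w tvw] : #|t :\ v| == 1.
  by move: ct; rewrite (cardsD1 v t) vt.
have /setD1P [wv wt] : w \in t :\ v by rewrite tvw set11.
have wt_hasse : hasse K [set w] t.
  by rewrite /hasse vK tK properEcard sub1set wt cards1 (eqP ct).
have wtW : ([set w], t) \notin W.
  by apply: contra wv => /(matched_face_unique W_matching stW); rewrite sv => /set1_inj ->.
have wt_edge : mod_edge K W [set w] t := mod_edge_unmatched wt_hasse wtW.
have := v_source t [set w]; rewrite -sv mod_edge_matched // (connect1 wt_edge).
by rewrite imset_f // => /(_ isT isT).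
Qed.

Definition cone_matching (a : T) : {set {set T} * {set T}} :=
  [set p | [&& p.1 \in K, p.2 \in K, a \notin p.1 & p.2 == a |: p.1]].

Lemma mem_cone_matching a s t :
  ((s, t) \in cone_matching a) = [&& s \in K, t \in K, a \notin s & t == a |: s].
Proof. by rewrite inE. Qed.

Lemma cone_matching_acyclic a : acyclic_matching K (cone_matching a).
Proof.
split; first split.
- case=> s t; rewrite mem_cone_matching => /and4P [sK tK na_s /eqP tE].
  by rewrite /hasse sK tK tE properEcard subsetU1 cardsU1 na_s ltnSn eqxx.
- case=> s t [s' t']; rewrite !mem_cone_matching.
  case/and4P=> _ _ na_s /eqP -> /and4P [_ _ na_s' /eqP ->] neq.
  have ss' : s != s' by apply: contraNneq neq => ->.
  apply/setP => z; rewrite !inE /=; apply/negbTE/negP.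
  case/andP=> /orP [] /eqP -> /orP [] /eqP.
  + by move=> s_s'; rewrite s_s' eqxx in ss'.
  + by move=> s_as'; move: na_s; rewrite s_as' setU11.
  + by move=> as_s'; move: na_s'; rewrite -as_s' setU11.
  + by move=> as_as'; move: ss'; rewrite -(setU1K na_s) as_as' (setU1K na_s') eqxx.
- (* unmatched Hasse edges add a vertex; a reversed cone edge drops [a] but gains 2 *)
  pose psi (s : {set T}) := #|s| + 2 * (a \notin s).
  apply: (@acyclic_of_potential _ _ psi) => x y.
  case/orP=> [/andP [/and4P [xK yK /proper_sub xy /eqP cy] xyW] | /andP [_]].
    rewrite /psi cy; have [ax | nax] := boolP (a \in x).
      by rewrite (subsetP xy a ax).
    have [ay|_] := boolP (a \in y); last by rewrite addSn.
    case/negP: xyW; rewrite mem_cone_matching xK yK nax eq_sym eqEcard cy cardsU1 nax.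
    by rewrite subUset sub1set ay xy add1n ltnSn.
  rewrite mem_cone_matching => /and4P [_ _ ay /eqP ->].
  by rewrite /psi cardsU1 ay setU11 /= addn0 add1n addn2.
Qed.

Lemma critical_cone_subset a : critical K (cone_matching a) \subset
  [set a] |: [set s : {set T} | s \subset [set~ a] & #|s| == k.+1].
Proof.
apply/subsetP => s; rewrite inE => /andP [sK /forall_inP s_crit].
have := sK; rewrite mem_skeleton_simplex => /andP [s_nz s_le].
rewrite !inE subsetC1.
have [a_s | na_s] := boolP (a \in s).
  have [/eqP s_a | s_a] := boolP (s :\ a == set0).
    by rewrite -(setD1K a_s) s_a setU0 eqxx.
  suff /s_crit : (s :\ a, s) \in cone_matching a by rewrite eqxx andbF.
  rewrite mem_cone_matching setD11 (setD1K a_s) eqxx sK mem_skeleton_simplex s_a.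
  by rewrite (leq_trans (subset_leq_card (subsetDl _ _)) s_le).
have [lt_s | ge_s] := ltnP #|s| k.+1.
  suff /s_crit : (s, a |: s) \in cone_matching a by rewrite eqxx.
  rewrite mem_cone_matching sK na_s eqxx mem_skeleton_simplex cardsU1 na_s add1n lt_s.
  by rewrite !andbT; apply/set0Pn; exists a; rewrite setU11.
by rewrite eqn_leq s_le ge_s orbT.
Qed.

Lemma card_critical_cone a :
  #|critical K (cone_matching a)| <= 'C(#|T|.-1, k.+1).+1.
Proof.
apply: leq_trans (subset_leq_card (critical_cone_subset a)) _.
by rewrite cardsU1 cards_draws cardsC1; case: (_ \notin _).
Qed.

End SkeletonMatchings.

Section Facets.
Variable n : nat.
Hypothesis n_gt0 : 0 < n.
Implicit Types (F G u : {set 'I_n.+1}) (S : {set {set 'I_n.+1}}).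

Lemma facetsE : facets n = [set [set~ i] | i : 'I_n.+1].
Proof.
apply/setP => F; rewrite !inE; apply/andP/imsetP => [[_ /eqP cF] | [i _ ->]].
  have /cards1P [i Fi] : #|~: F| == 1 by rewrite cardsCs setCK card_ord cF subSnn.
  by exists i; rewrite // -Fi setCK.
by rewrite -card_gt0 cardsC1 card_ord.
Qed.

Lemma card_facets : #|facets n| = n.+1.
Proof. by rewrite facetsE card_imset ?card_ord //; exact: setC1_inj. Qed.

Lemma mem_edge_of u F : (F \in edge_of u) = (F \in facets n) && (u \subset F).
Proof. exact: in_set. Qed.

Lemma edge_ofE u : edge_of u = [set [set~ i] | i in ~: u].
Proof.
apply/setP => F; rewrite inE facetsE; apply/andP/imsetP => [[/imsetP [i _ ->] ui] | [i iu ->]].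
  by exists i; rewrite // inE -subsetC1.
by split; [exact: imset_f | rewrite subsetC1 -in_setC].
Qed.

Lemma card_edge_of u : #|u| = n.-1 -> #|edge_of u| = 2.
Proof.
move=> cu; rewrite edge_ofE card_imset; last exact: setC1_inj.
by have := cardsC u; rewrite cu card_ord; lia.
Qed.

Lemma edge_of_pair u F G : #|u| = n.-1 -> F \in facets n -> G \in facets n ->
  F != G -> u \subset F -> u \subset G -> edge_of u = [set F; G].
Proof.
move=> cu Ff Gf FG uF uG; apply/eqP; rewrite eq_sym eqEcard card_edge_of // cards2 FG.
by rewrite subUset !sub1set !mem_edge_of Ff Gf uF uG.
Qed.

Lemma card_setI_facets F G : F \in facets n -> G \in facets n -> F != G ->
  #|F :&: G| = n.-1.
Proof.
rewrite facetsE => /imsetP [i _ ->] /imsetP [j _ ->] FG.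
have ij : i != j by apply: contraNneq FG => ->.
by rewrite -setCU cardsCs setCK card_ord cards2 ij subn2.
Qed.

Definition crossing S u := [exists F in facets n, exists G in facets n,
  [&& F \in S, G \notin S, u \subset F & u \subset G]].

Lemma crossing_intro S u F G : F \in facets n -> G \in facets n ->
  F \in S -> G \notin S -> u \subset F -> u \subset G -> crossing S u.
Proof.
move=> Ff Gf FS GS uF uG; apply/exists_inP; exists F => //.
by apply/exists_inP; exists G; rewrite ?FS ?GS ?uF ?uG.
Qed.

Lemma crossing_avoiding S x a : crossing S x -> a \in x ->
  exists y, [/\ crossing S y, #|y| = n.-1, x :\ a \subset y & a \notin y].
Proof.
case/exists_inP => F Ff /exists_inP [G Gf /and4P [FS GS xF xG]] ax.
have Hf : [set~ a] \in facets n by rewrite facetsE; apply: imset_f.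
have cut_a Z : Z \in facets n -> x \subset Z ->
    [/\ #|Z :&: [set~ a]| = n.-1, x :\ a \subset Z :&: [set~ a] & a \notin Z :&: [set~ a]].
  move=> Zf xZ; split; last by rewrite inE setC11 andbF.
    by apply: card_setI_facets => //; apply: contraTneq (subsetP xZ a ax) => ->; rewrite setC11.
  by rewrite subsetI (subset_trans (subsetDl x [set a]) xZ) subsetC1 setD11.
have [HS | HS] := boolP ([set~ a] \in S).
  have [cy xy ay] := cut_a G Gf xG; exists (G :&: [set~ a]); split => //.
  exact: crossing_intro Hf Gf HS GS (subsetIr _ _) (subsetIl _ _).
have [cy xy ay] := cut_a F Ff xF; exists (F :&: [set~ a]); split => //.
exact: crossing_intro Ff Hf FS HS (subsetIl _ _) (subsetIr _ _).
Qed.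

End Facets.

Local Notation skel n := (skeleton (simplex 'I_n.+1) (n - 2)).

Lemma critical_crossing n (S : {set {set 'I_n.+1}}) O (F G : {set 'I_n.+1}) :
  1 < n -> acyclic_matching (skel n) O ->
  F \in facets n -> G \in facets n -> F \in S -> G \notin S ->
  exists2 u, u \in critical (skel n) O & (#|u| == n.-1) && crossing S u.
Proof.
move=> n_gt1 [O_matching O_acyclic] Ff Gf FS GS; have n_gt0 : 0 < n by lia.
have K_top (u : {set 'I_n.+1}) : #|u| = n.-1 -> u \in skel n.
  by move=> cu; rewrite mem_skeleton_simplex -card_gt0 cu; apply/andP; split; lia.
pose C := [set u in skel n | (#|u| == n.-1) && crossing S u].
have FG_C : F :&: G \in C.
  have FG : F != G by apply: contraNneq GS => <-.
  rewrite inE K_top ?(card_setI_facets n_gt0) // eqxx /=.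
  exact: crossing_intro Ff Gf FS GS (subsetIl _ _) (subsetIr _ _).
have [x + x_sink] := acyclic_sink O_acyclic FG_C.
rewrite inE => /andP [xK /andP [/eqP cx xcross]].
exists x; last by rewrite cx eqxx.
apply: contraT => x_nc.
have [|s sxO] := matched_down_of_top O_matching xK _ x_nc; first by rewrite cx; lia.
have /and4P [sK _ /properP [sx [a ax a_s]] /eqP csx] := O_matching.1 _ sxO.
have [y [ycross cy xay ay]] := crossing_avoiding n_gt0 xcross ax.
have sy : s \subset y.
  apply: subset_trans xay; apply/subsetP => z zs.
  by rewrite !inE (subsetP sx _ zs) andbT; apply: contraNneq a_s => <-.
have syO : (s, y) \notin O.
  by apply: contra ay => /(matched_coface_unique O_matching sxO) <-.
have sy_hasse : hasse (skel n) s y.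
  by rewrite /hasse sK K_top // properEcard sy cy -cx csx ltnSn eqxx.
have yC : y \in C by rewrite inE K_top // cy eqxx ycross.
have sy_edge := mod_edge_unmatched sy_hasse syO.
by have := x_sink s y (mod_edge_matched O_matching sxO) (connect1 sy_edge); rewrite yC.
Qed.

Lemma critical_edges_connected n O : 1 < n -> acyclic_matching (skel n) O ->
  forall F G, F \in facets n -> G \in facets n ->
  connect (gadj [set edge_of u | u in [set u in critical (skel n) O | #|u| == n.-1]]) F G.
Proof.
move=> n_gt1 O_acyclic F G Ff Gf; apply: connect_of_cuts => S FS GS.
have [u u_critical /andP [/eqP cu]] := critical_crossing n_gt1 O_acyclic Ff Gf FS GS.
case/exists_inP => F' F'f /exists_inP [G' G'f /and4P [F'S G'S uF' uG']].
have F'G' : F' != G' by apply: contraNneq G'S => <-.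
exists F', G'; split => //; rewrite /gadj F'G' -(edge_of_pair (ltnW n_gt1) cu) //.
by apply: imset_f; rewrite inE u_critical cu eqxx.
Qed.

Theorem mainTheorem3 (n : nat) (hn : 3 <= n)
  (O : {set {set 'I_n.+1} * {set 'I_n.+1}}) :
  optimal_acyclic_matching (skeleton (simplex 'I_n.+1) (n - 2)) O ->
  let U := [set u in critical (skeleton (simplex 'I_n.+1) (n - 2)) O
              | #|u| == n.-1] in
  #|U| = n /\ is_spanning_tree (facets n) [set edge_of u | u in U].
Proof.
case=> O_acyclic O_optimal U; have n_gt0 : 0 < n by lia.
have card_critical : #|critical (skel n) O| <= n.+1.
  apply: leq_trans (O_optimal _ (cone_matching_acyclic (n - 2) ord0)) _.
  apply: leq_trans (card_critical_cone _ _) _.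
  have -> : (n - 2).+1 = n - 1 by lia.
  by rewrite card_ord bin_sub // bin1.
have [v v_critical] := critical_vertex ord0 O_acyclic.
have card_U : #|U| <= n.
  rewrite -ltnS; apply: leq_trans card_critical; apply: proper_card; apply/properP.
  split; first by apply/subsetP => u; rewrite inE => /andP [].
  by exists [set v]; rewrite // inE v_critical cards1 /=; lia.
set E := [set edge_of u | u in U].
have E_edges e : e \in E -> e \subset facets n /\ #|e| = 2.
  case/imsetP => u; rewrite inE => /andP [_ /eqP cu] ->.
  by split; [apply/subsetP => F; rewrite mem_edge_of => /andP [] | exact: card_edge_of].
have E_connected := critical_edges_connected (ltnW hn) O_acyclic.
have card_E : #|E| < #|facets n|.
  by rewrite card_facets // ltnS (leq_trans (leq_imset_card _ _) card_U).
have [card_facets_E E_tree] := connected_card_spanning_tree E_edges E_connected card_E.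
have card_E_n : #|E| = n by apply/eqP; rewrite -eqSS -card_facets_E card_facets.
by split => //; apply/eqP; rewrite eqn_leq card_U -{1}card_E_n leq_imset_card.
Qed.
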